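(* Let $(\varphi_\alpha)_{\alpha>0}$ be a non-linear regularizing filter satisfying Assumption B. Let $z\in\operatorname{ran}(\mathbf{M}_\kappa)\cap\operatorname{ran}(\Phi_{\tilde\alpha,\kappa})$ for some $\tilde\alpha>0$. Let $\delta_k\to0$, $\alpha_k\to0$ be positive sequences for which there is a constant $C>0$ with $\delta_k^2\le C\alpha_k$ for all $k$, and let $z^k\in\ell^2(\Lambda)$ with $\|z-z^k\|_2\le\delta_k$. Then $\mathbf{M}_\kappa^+\circ\Phi_{\alpha_k,\kappa}(z^k)\rightharpoonup\mathbf{M}_\kappa^+z$ weakly as $k\to\infty$.
   Context: $\Lambda$ is an at most countable index set and $\kappa=(\kappa_\lambda)_{\lambda\in\Lambda}\in(0,\infty)^\Lambda$ with $\sup_\lambda\kappa_\lambda<\infty$. $\mathbf{M}_\kappa\colon\ell^2(\Lambda)\to\ell^2(\Lambda)$, $(x_\lambda)\mapsto(\kappa_\lambda x_\lambda)$; $\mathbf{M}_\kappa^+$ is its Moore–Penrose inverse, with domain $\operatorname{ran}(\mathbf{M}_\kappa)=\{(c_\lambda)\in\ell^2:(c_\lambda/\kappa_\lambda)\in\ell^2\}$ and $\mathbf{M}_\kappa^+((c_\lambda))=(c_\lambda/\kappa_\lambda)$. A non-linear regularizing filter is a family $(\varphi_\alpha)_{\alpha>0}$ of functions $\varphi_\alpha\colon(0,\infty)\times\mathbb{R}\to\mathbb{R}$ such that for all $\alpha,\kappa>0$: (F1) $\varphi_\alpha(\kappa,\cdot)$ is non-decreasing; (F2) $\varphi_\alpha(\kappa,\cdot)$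 is 1-Lipschitz; (F3) $\varphi_\alpha(\kappa,0)=0$; (F4) $\lim_{\alpha\to0}\varphi_\alpha(\kappa,c)=c$ for all $c\in\mathbb{R}$. $\Phi_{\alpha,\kappa}\colon\ell^2(\Lambda)\to\ell^2(\Lambda)$, $(c_\lambda)\mapsto(\varphi_\alpha(\kappa_\lambda,c_\lambda))_\lambda$. Assumption B: (B1) for all $\kappa>0$ and $x\in\mathbb{R}$, $(|\varphi_\alpha(\kappa,x)|)_{\alpha>0}$ is monotonically increasing as $\alpha\downarrow0$; (B2) there exist $d,e>0$ such that for all $\kappa,\alpha>0$, $x\in\mathbb{R}$: $|x|\le d\alpha/\kappa\Rightarrow|\varphi_\alpha(\kappa,x)|\le\frac{e\kappa}{\sqrt\alpha}|x|$. *)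

From HB Require Import structures.
From mathcomp Require Import all_boot all_order all_algebra.
From mathcomp Require Import all_classical all_reals all_analysis.
Set Implicit Arguments. Unset Strict Implicit. Unset Printing Implicit Defensive.
Import Order.TTheory GRing.Theory Num.Theory.
Import numFieldNormedType.Exports.
Local Open Scope classical_set_scope.
Local Open Scope ring_scope.

Section L2.
Variables (R : realType) (L : countType).

Definition l2 (x : L -> R) : Prop :=
  (\esum_(i in [set: L]) ((x i) ^+ 2)%:E < +oo)%E.

Definition l2norm (x : L -> R) : R :=
  Num.sqrt (fine (\esum_(i in [set: L]) ((x i) ^+ 2)%:E)).

(* l^2 inner product (absolutely convergent for x, y in l^2):
   sum of positive parts minus sum of negative parts of x_i y_i *)
Definition l2dot (x y : L -> R) : R :=
  fine (\esum_(i in [set: L]) ((fun j => (x j * y j)%:E)^\+ i))%E -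
  fine (\esum_(i in [set: L]) ((fun j => (x j * y j)%:E)^\- i))%E.

Definition l2_weak_cvg (u : nat -> L -> R) (x : L -> R) : Prop :=
  forall y, l2 y -> (fun k => l2dot (u k) y) @ \oo --> l2dot x y.

(* M_kappa and its Moore-Penrose inverse (on its domain ran M_kappa) *)
Definition Mk (kap : L -> R) (x : L -> R) : L -> R := fun l => kap l * x l.
Definition Mplus (kap : L -> R) (c : L -> R) : L -> R := fun l => c l / kap l.

Definition in_ran_M (kap : L -> R) (c : L -> R) : Prop :=
  l2 c /\ l2 (Mplus kap c).

Definition Phi (phi : R -> R -> R -> R) (a : R) (kap : L -> R) (c : L -> R)
  : L -> R := fun l => phi a (kap l) (c l).

Definition in_ran_Phi (phi : R -> R -> R -> R) (a : R) (kap : L -> R)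
  (z : L -> R) : Prop :=
  exists w, l2 w /\ z = Phi phi a kap w.

End L2.

(* phi a k c stands for varphi_alpha(kappa, c) with a = alpha, k = kappa *)
Definition nonlinear_filter (R : realType) (phi : R -> R -> R -> R) : Prop :=
  forall a k : R, 0 < a -> 0 < k ->
    [/\ (forall x y, x <= y -> phi a k x <= phi a k y),
        (forall x y, `|phi a k x - phi a k y| <= `|x - y|),
        phi a k 0 = 0 &
        (forall c, (fun b => phi b k c) @ 0^'+ --> c)].

Definition assumptionB (R : realType) (phi : R -> R -> R -> R) : Prop :=
  (forall k x a b : R, 0 < k -> 0 < a -> a <= b -> `|phi b k x| <= `|phi a k x|)
  /\ (exists d e : R, 0 < d /\ 0 < e /\
       forall k a x : R, 0 < k -> 0 < a -> `|x| <= d * a / k ->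
         `|phi a k x| <= e * k / Num.sqrt a * `|x|).

From HB Require Import structures.
From mathcomp Require Import all_boot all_order all_algebra.
From mathcomp Require Import all_classical all_reals all_analysis.
From mathcomp Require Import ring lra.
Set Implicit Arguments.
Unset Strict Implicit.
Unset Printing Implicit Defensive.
Import Order.TTheory GRing.Theory Num.Theory.
Import numFieldNormedType.Exports.
Local Open Scope classical_set_scope.
Local Open Scope ring_scope.

(* Write x := M^+ z and u_k := M^+ Phi_{alpha_k}(z^k).  Coordinatewise,
   |phi_alpha(kappa, w)| <= |w| and (B2) give
     (phi_alpha(kappa, w) / kappa)^2 <= 4 (z / kappa)^2 + K / alpha (z - w)^2
   whenever (z - w)^2 <= C alpha, with K depending only on C, d and e.  Summing
   with w = z^k and ||z - z^k||^2 <= delta_k^2 <= C alpha_k bounds u_k in l^2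
   by 4 ||x||^2 + K C.  Each coordinate of u_k tends to that of x since phi is
   1-Lipschitz and phi_alpha(kappa, c) -> c.  Finally a bounded sequence in l^2
   converging coordinatewise converges weakly: against a fixed y, the inner
   product is a finite sum up to a tail that AM-GM bounds uniformly. *)

Section RealFacts.
Variable R : realDomainType.

Lemma sqr_le_sqr_of_norm_le (x y : R) : `|x| <= `|y| -> x ^+ 2 <= y ^+ 2.
Proof.
move=> xy; rewrite -[x ^+ 2]real_normK ?num_real // -[y ^+ 2]real_normK ?num_real //.
by rewrite ler_sqr ?nnegrE.
Qed.

Lemma norm_le_of_sqr_le (x y : R) : 0 <= y -> x ^+ 2 <= y ^+ 2 -> `|x| <= y.
Proof.
move=> y0; rewrite -[x ^+ 2]real_normK ?num_real //.
by have := normr_ge0 x; nra.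
Qed.

End RealFacts.

Lemma cvg_of_norm_sub_le (R : realType) (y delta : nat -> R) (x : R) :
  (forall k, `|x - y k| <= delta k) -> delta @ \oo --> 0 -> y @ \oo --> x.
Proof.
move=> xy delta0.
apply: (squeeze_cvgr (f := fun k => x - delta k) (h := fun k => x + delta k)).
- by apply: nearW => k; have := xy k; rewrite ler_norml; lra.
- by rewrite -[X in _ --> X]subr0; apply: cvgB => //; exact: cvg_cst.
- by rewrite -[X in _ --> X]addr0; apply: cvgD => //; exact: cvg_cst.
Qed.

Section NonnegativeEsum.
Variables (R : realType) (T : choiceType).
Implicit Types (A F : set T) (f g : T -> R).

Definition esumR A f : \bar R := (\esum_(i in A) (f i)%:E)%E.

Lemma esumR_ge0 A f : (forall i, 0 <= f i) -> (0 <= esumR A f)%E.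
Proof. by move=> f0; apply: esum_ge0 => i _; rewrite lee_fin. Qed.

Lemma esumR_ge_term A f l : A l -> (forall i, 0 <= f i) ->
  ((f l)%:E <= esumR A f)%E.
Proof.
move=> Al f0; apply: esum_ge; exists [set l]; last by rewrite fsbig_set1.
by split; [exact: finite_set1 | move=> i ->].
Qed.

Lemma le_esumR A f g : (forall i, f i <= g i) -> (esumR A f <= esumR A g)%E.
Proof. by move=> fg; apply: le_esum => i _; rewrite lee_fin. Qed.

Lemma esumRD A f g : (forall i, 0 <= f i) -> (forall i, 0 <= g i) ->
  esumR A (fun i => f i + g i) = (esumR A f + esumR A g)%E.
Proof.
by move=> f0 g0; rewrite /esumR -esumD // => i _; rewrite lee_fin.
Qed.

Lemma esumRZ_le A (c : R) f : 0 <= c -> (forall i, 0 <= f i) ->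
  (esumR A (fun i => (c * f i)%R) <= c%:E * esumR A f)%E.
Proof.
move=> c0 f0; apply: ge_ereal_sup => _ [X [finX XA] <-] /=.
under eq_fsbigr => i _ do rewrite EFinM.
rewrite -ge0_mule_fsumr => [|i]; last by rewrite lee_fin.
by rewrite lee_wpmul2l ?lee_fin //; apply: ereal_sup_ubound; exists X.
Qed.

Lemma esumR_le_setT A f : (forall i, 0 <= f i) -> (esumR A f <= esumR setT f)%E.
Proof.
move=> f0; rewrite /esumR (esumID A setT) => [|i _]; last by rewrite lee_fin.
by rewrite setTI leeDl // esum_ge0 // => i _; rewrite lee_fin.
Qed.

Lemma esumR_fin A f : (forall i, 0 <= f i) -> (esumR A f < +oo)%E ->
  esumR A f = (fine (esumR A f))%:E.
Proof. by move=> f0 fin; rewrite fineK // ge0_fin_numE // esumR_ge0. Qed.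

Lemma esumR_setT_split F f : finite_set F -> (forall i, 0 <= f i) ->
  esumR setT f = ((\sum_(i \in F) f i)%:E + esumR (~` F) f)%E.
Proof.
move=> finF f0; rewrite /esumR (esumID F) => [|i _]; last by rewrite lee_fin.
by rewrite !setTI esum_fset // ?fsumEFin // => i _; rewrite lee_fin.
Qed.

Lemma fine_esumR_setT_split F f : finite_set F -> (forall i, 0 <= f i) ->
  (esumR setT f < +oo)%E ->
  fine (esumR setT f) = \sum_(i \in F) f i + fine (esumR (~` F) f).
Proof.
move=> finF f0 fin.
have finC : (esumR (~` F) f < +oo)%E by apply: le_lt_trans (esumR_le_setT _ f0) fin.
by rewrite (esumR_setT_split finF f0) (esumR_fin f0 finC).
Qed.

Lemma esumR_small_tail f (eps : R) : (forall i, 0 <= f i) ->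
  (esumR setT f < +oo)%E -> 0 < eps ->
  exists2 F, finite_set F & (esumR (~` F) f <= eps%:E)%E.
Proof.
move=> f0 fin eps0.
have : ((fine (esumR setT f) - eps)%:E < esumR setT f)%E.
  by rewrite {2}(esumR_fin f0 fin) lte_fin gtrDl oppr_lt0.
move=> /ereal_sup_gt[_ [F [finF _] <-]]; rewrite fsumEFin // lte_fin => sumF.
exists F => //; rewrite (esumR_fin f0 (le_lt_trans (esumR_le_setT _ f0) fin)).
by rewrite lee_fin; move: sumF; rewrite (fine_esumR_setT_split finF f0 fin); lra.
Qed.

(* [l2dot x y] is [signed_esum (fun i => x i * y i)]. *)
Definition signed_esum f : R :=
  fine (\esum_(i in [set: T]) ((fun j => (f j)%:E)^\+ i))%E -
  fine (\esum_(i in [set: T]) ((fun j => (f j)%:E)^\- i))%E.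

Lemma signed_esumE f : signed_esum f =
  fine (esumR setT (fun j => Num.max (f j) 0)) -
  fine (esumR setT (fun j => Num.max (- f j) 0)).
Proof.
rewrite /signed_esum /esumR; congr (fine _ - fine _); apply: eq_esum => i _.
  by rewrite funeposE EFin_max.
by rewrite funenegE EFin_max EFinN.
Qed.

Lemma signed_esum_tail f F : finite_set F ->
  (esumR setT (fun j => `|f j|%R) < +oo)%E ->
  `|signed_esum f - \sum_(i \in F) f i| <= fine (esumR (~` F) (fun j => `|f j|)).
Proof.
move=> finF fin; rewrite signed_esumE.
set p := fun j => Num.max (f j) 0; set n := fun j => Num.max (- f j) 0.
have p0 i : 0 <= p i by rewrite le_max lexx orbT.
have n0 i : 0 <= n i by rewrite le_max lexx orbT.
have pDn i : p i + n i = `|f i| by rewrite /p /n !maxr_absE !subr0 !addr0 normrN; field.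
have pBn i : p i - n i = f i by rewrite /p /n !maxr_absE !subr0 !addr0 normrN; field.
have finp : (esumR setT p < +oo)%E.
  by apply: le_lt_trans fin; apply: le_esumR => i; rewrite -pDn lerDl.
have finn : (esumR setT n < +oo)%E.
  by apply: le_lt_trans fin; apply: le_esumR => i; rewrite -pDn lerDr.
have finCp : (esumR (~` F) p < +oo)%E by apply: le_lt_trans (esumR_le_setT _ p0) finp.
have finCn : (esumR (~` F) n < +oo)%E by apply: le_lt_trans (esumR_le_setT _ n0) finn.
rewrite (fine_esumR_setT_split finF p0 finp) (fine_esumR_setT_split finF n0 finn).
have -> : esumR (~` F) (fun j => `|f j|) = esumR (~` F) (fun j => p j + n j).
  by rewrite /esumR; apply: eq_esum => i _; rewrite pDn.
rewrite esumRD // fineD ?ge0_fin_numE ?esumR_ge0 //.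
have -> : \sum_(i \in F) f i = \sum_(i \in F) p i - \sum_(i \in F) n i.
  by rewrite !fsbig_finite //= -sumrB; apply: eq_bigr => i _; rewrite pBn.
have := fine_ge0 (esumR_ge0 (~` F) p0); have := fine_ge0 (esumR_ge0 (~` F) n0).
set P := fine (esumR _ p); set N := fine (esumR _ n); rewrite ler_norml; lra.
Qed.

Lemma abs_mul_le_sqr (t a b : R) : 0 < t -> `|a * b| <= t * a ^+ 2 + b ^+ 2 / t.
Proof.
move=> t0; rewrite -(ler_pM2r t0) mulrDl mulfVK ?gt_eqF //.
rewrite normrM -[a ^+ 2]real_normK ?num_real // -[b ^+ 2]real_normK ?num_real //.
have := sqr_ge0 (t * `|a| - `|b|); have := normr_ge0 a; have := normr_ge0 b; nra.
Qed.

Lemma esumR_abs_mul_le A (a y : T -> R) (t B V : R) : 0 < t ->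
  (esumR A (fun i => a i ^+ 2)%R <= B%:E)%E ->
  (esumR A (fun i => y i ^+ 2)%R <= V%:E)%E ->
  (esumR A (fun i => `|a i * y i|)%R <= (t * B + V / t)%:E)%E.
Proof.
move=> t0 aB yV; have tV0 : 0 <= t^-1 by rewrite invr_ge0 ltW.
apply: (le_trans (le_esumR A (fun i => abs_mul_le_sqr (a i) (y i) t0))).
under [X in (esumR A X <= _)%E]eq_fun do rewrite [_ / t]mulrC.
rewrite esumRD => [|i|i]; last 2 first.
- by rewrite mulr_ge0 ?sqr_ge0 ?ltW.
- by rewrite mulr_ge0 ?sqr_ge0.
rewrite EFinD; apply: leeD.
  apply: le_trans (esumRZ_le A (ltW t0) (fun i => sqr_ge0 (a i))) _.
  by rewrite EFinM; apply: lee_wpmul2l => //; rewrite lee_fin ltW.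
apply: le_trans (esumRZ_le A tV0 (fun i => sqr_ge0 (y i))) _.
by rewrite mulrC EFinM; apply: lee_wpmul2l => //; rewrite lee_fin.
Qed.

Lemma signed_esum_mul_uniform_tail (y : T -> R) (B eps : R) : 0 < eps ->
  (esumR setT (fun i => y i ^+ 2)%R < +oo)%E ->
  exists2 F, finite_set F & forall a : T -> R,
    (esumR setT (fun i => a i ^+ 2)%R <= B%:E)%E ->
    `|signed_esum (fun i => a i * y i) - \sum_(i \in F) a i * y i| <= eps.
Proof.
move=> eps0 finy; set B' := `|B| + 1; set t := eps / (2 * B').
have B'0 : 0 < B' by rewrite ltr_pwDr ?normr_ge0.
have t0 : 0 < t by rewrite divr_gt0 ?mulr_gt0.
have y0 i : 0 <= y i ^+ 2 by exact: sqr_ge0.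
have [F finF tailF] :=
  esumR_small_tail y0 finy (divr_gt0 (mulr_gt0 eps0 t0) (ltr0n _ 2)).
exists F => // a aB.
have aB' : (esumR setT (fun i => a i ^+ 2)%R <= B'%:E)%E.
  by apply: le_trans aB _; rewrite lee_fin (le_trans (ler_norm B)) ?lerDl.
have yV : (esumR setT (fun i => y i ^+ 2)%R <=
    (fine (esumR setT (fun i => y i ^+ 2)%R))%:E)%E by rewrite -esumR_fin.
have ay0 i : 0 <= `|a i * y i| by exact: normr_ge0.
have finay : (esumR setT (fun i => `|a i * y i|)%R < +oo)%E.
  exact: le_lt_trans (esumR_abs_mul_le ltr01 aB' yV) (ltry _).
apply: le_trans (signed_esum_tail finF finay) _.
rewrite -lee_fin -esumR_fin //; last exact: le_lt_trans (esumR_le_setT _ ay0) finay.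
have aB'F := le_trans (esumR_le_setT (~` F) (fun i => sqr_ge0 (a i))) aB'.
apply: le_trans (esumR_abs_mul_le t0 aB'F tailF) _.
rewrite lee_fin [leLHS](_ : _ = eps) // /t.
by field; rewrite ?gt_eqF ?mulr_gt0.
Qed.

Lemma cvg_fsum F (u : nat -> T -> R) (x : T -> R) : finite_set F ->
  (forall i, u ^~ i @ \oo --> x i) ->
  (fun k => \sum_(i \in F) u k i) @ \oo --> \sum_(i \in F) x i.
Proof.
move=> finF ux; rewrite fsbig_finite //; under eq_fun do rewrite fsbig_finite //.
by apply: cvg_big => //; exact: add_continuous.
Qed.

End NonnegativeEsum.

Section SquareSummable.
Variables (R : realType) (L : countType).
Implicit Types x y : L -> R.

Lemma l2_of_norm_le x y : l2 y -> (forall l, `|x l| <= `|y l|) -> l2 x.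
Proof.
move=> l2y xy; apply: le_lt_trans l2y.
by apply: (le_esumR setT (f := fun l => x l ^+ 2)) => l; exact: sqr_le_sqr_of_norm_le.
Qed.

Lemma l2B x y : l2 x -> l2 y -> l2 (fun l => x l - y l).
Proof.
move=> l2x l2y; rewrite /l2 -/(esumR _ _).
apply: (@le_lt_trans _ _ (esumR setT (fun l => 2 * x l ^+ 2 + 2 * y l ^+ 2))).
  by apply: le_esumR => l; have := sqr_ge0 (x l + y l); nra.
rewrite esumRD => [|l|l]; try by rewrite mulr_ge0 ?sqr_ge0.
apply: lte_add_pinfty.
  apply: le_lt_trans (esumRZ_le _ (ler0n _ 2) (fun l => sqr_ge0 (x l))) _.
  by rewrite (esumR_fin (fun l => sqr_ge0 (x l)) l2x) -EFinM ltry.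
apply: le_lt_trans (esumRZ_le _ (ler0n _ 2) (fun l => sqr_ge0 (y l))) _.
by rewrite (esumR_fin (fun l => sqr_ge0 (y l)) l2y) -EFinM ltry.
Qed.

Lemma esumR_sqr_le_of_l2norm_le x (r : R) : l2 x -> l2norm x <= r ->
  (esumR setT (fun l => x l ^+ 2)%R <= (r ^+ 2)%:E)%E.
Proof.
move=> l2x sr.
have s0 := fine_ge0 (esumR_ge0 setT (fun l => sqr_ge0 (x l))).
rewrite (esumR_fin (fun l => sqr_ge0 (x l)) l2x) lee_fin -(sqr_sqrtr s0).
apply: sqr_le_sqr_of_norm_le; rewrite ger0_norm ?sqrtr_ge0 //.
exact: le_trans sr (ler_norm r).
Qed.

Lemma l2_weak_cvg_of_bounded (u : nat -> L -> R) x (B : R) :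
  (forall k, (esumR setT (fun l => u k l ^+ 2)%R <= B%:E)%E) -> l2 x ->
  (forall l, u ^~ l @ \oo --> x l) -> l2_weak_cvg u x.
Proof.
move=> uB l2x ux y l2y; apply/cvgrPdist_lt => eps eps0.
set B' := Num.max B (fine (esumR setT (fun l => x l ^+ 2)%R)).
have xB' : (esumR setT (fun l => x l ^+ 2)%R <= B'%:E)%E.
  by rewrite esumR_fin ?lee_fin ?le_max ?lexx ?orbT // => l; exact: sqr_ge0.
have uB' k : (esumR setT (fun l => u k l ^+ 2)%R <= B'%:E)%E.
  by apply: le_trans (uB k) _; rewrite lee_fin le_max lexx.
have [F finF tailF] := signed_esum_mul_uniform_tail B' (divr_gt0 eps0 (ltr0n _ 4)) l2y.
have uyF : (fun k => \sum_(i \in F) u k i * y i) @ \oo --> \sum_(i \in F) x i * y i.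
  by apply: cvg_fsum => // l; apply: cvgMr_tmp.
move/cvgrPdist_lt : uyF => /(_ (eps / 2) (divr_gt0 eps0 (ltr0n _ 2))).
apply: filterS => k; have := tailF _ (uB' k); have := tailF _ xB'.
rewrite /l2dot -!/(signed_esum _) !ler_norml !ltr_norml.
by move=> /andP[? ?] /andP[? ?] /andP[? ?]; apply/andP; split; lra.
Qed.

End SquareSummable.

Section NonlinearFilter.
Variables (R : realType) (phi : R -> R -> R -> R).
Hypothesis phi_filter : nonlinear_filter phi.

Lemma norm_filter_le a k c : 0 < a -> 0 < k -> `|phi a k c| <= `|c|.
Proof.
move=> a0 k0; have [_ phi_lip phi0 _] := phi_filter a0 k0.
by have := phi_lip c 0; rewrite phi0 !subr0.
Qed.

Lemma filter_cvg (k c : R) (alpha w : nat -> R) : 0 < k -> (forall n, 0 < alpha n) ->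
  alpha @ \oo --> 0 -> w @ \oo --> c -> (fun n => phi (alpha n) k (w n)) @ \oo --> c.
Proof.
move=> k0 alpha0 alpha_cvg wc.
have phic : (fun n => phi (alpha n) k c) @ \oo --> c.
  have [_ _ _ phi_lim] := phi_filter ltr01 k0.
  exact: (cvg_at_rightP _ _ _).1 (phi_lim c) alpha (conj alpha0 alpha_cvg).
have dist_le n : `|phi (alpha n) k (w n) - phi (alpha n) k c| <= `|w n - c|.
  by have [_ phi_lip _ _] := phi_filter (alpha0 n) k0; exact: phi_lip.
have wc0 : (fun n => w n - c) @ \oo --> 0.
  by rewrite -(subrr c); apply: cvgB => //; exact: cvg_cst.
have diff0 : (fun n => phi (alpha n) k (w n) - phi (alpha n) k c) @ \oo --> 0.
  apply/cvgr0Pnorm_lt => eps eps0; near=> n; apply: le_lt_trans (dist_le n) _.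
  by near: n; exact: cvgr0_norm_lt.
have -> : (fun n => phi (alpha n) k (w n)) =
    (fun n => (phi (alpha n) k (w n) - phi (alpha n) k c) + phi (alpha n) k c).
  by apply: funext => n; rewrite subrK.
by rewrite -[X in _ --> X]add0r; apply: cvgD.
Unshelve. all: by end_near. Qed.

Variables (d e : R).
Hypotheses (d_gt0 : 0 < d) (e_gt0 : 0 < e).
Hypothesis phi_small : forall k a x, 0 < k -> 0 < a -> `|x| <= d * a / k ->
  `|phi a k x| <= e * k / Num.sqrt a * `|x|.

Lemma sqr_filter_div_le_near a k z w : 0 < a -> 0 < k -> `|w| <= 2 * `|z| ->
  (phi a k w / k) ^+ 2 <= 4 * (z / k) ^+ 2.
Proof.
move=> a0 k0 wz; rewrite (_ : 4 * _ = (2 * (z / k)) ^+ 2); last by ring.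
apply: sqr_le_sqr_of_norm_le.
rewrite !normrM normfV (gtr0_norm k0) normr_nat mulrA ler_pM2r ?invr_gt0 //.
exact: le_trans (norm_filter_le _ a0 k0) wz.
Qed.

Lemma sqr_filter_div_le_small a k z w : 0 < a -> 0 < k ->
  `|w| <= 2 * `|z - w| -> `|w| <= d * a / k ->
  (phi a k w / k) ^+ 2 <= 4 * e ^+ 2 / a * (z - w) ^+ 2.
Proof.
move=> a0 k0 wzw wsmall.
have sa0 : 0 < Num.sqrt a by rewrite sqrtr_gt0.
have -> : 4 * e ^+ 2 / a * (z - w) ^+ 2 = (2 * e * (z - w) / Num.sqrt a) ^+ 2.
  by rewrite expr_div_n sqr_sqrtr ?ltW //; field; rewrite gt_eqF.
apply: sqr_le_sqr_of_norm_le.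
rewrite !normrM !normfV (gtr0_norm k0) (gtr0_norm sa0) (gtr0_norm e_gt0) normr_nat.
rewrite ler_pdivrMr //; apply: le_trans (phi_small k0 a0 wsmall) _.
rewrite [leRHS](_ : _ = e * k / Num.sqrt a * (2 * `|z - w|)); last by ring.
by rewrite ler_wpM2l // divr_ge0 ?mulr_ge0 ?ltW.
Qed.

(* (B2) is unavailable here, but [d * a / k < |w| <= 2 |z - w|] together with
   [(z - w)^2 <= C a] forces [d^2 a <= 4 k^2 C]. *)
Lemma sqr_filter_div_le_large a k z w (C : R) : 0 < a -> 0 < k ->
  `|w| <= 2 * `|z - w| -> d * a / k < `|w| -> (z - w) ^+ 2 <= C * a ->
  (phi a k w / k) ^+ 2 <= 16 * C / (d ^+ 2 * a) * (z - w) ^+ 2.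
Proof.
move=> a0 k0 wzw wlarge zwC.
have a_le : d ^+ 2 * a <= 4 * k ^+ 2 * C.
  have dak : d * a <= 2 * k * `|z - w|.
    by rewrite ltr_pdivrMr // in wlarge; nra.
  have sq : (d * a) ^+ 2 <= 4 * k ^+ 2 * (z - w) ^+ 2.
    rewrite -[(z - w) ^+ 2]real_normK ?num_real //.
    have := mulr_ge0 (ltW d_gt0) (ltW a0); nra.
  have := ler_wpM2l (mulr_ge0 (ler0n _ 4) (sqr_ge0 k)) zwC.
  rewrite -(ler_pM2r a0); nra.
have phik : (phi a k w / k) ^+ 2 <= 4 / k ^+ 2 * (z - w) ^+ 2.
  rewrite (_ : 4 / k ^+ 2 * _ = (2 * (z - w) / k) ^+ 2); last by field; rewrite gt_eqF.
  apply: sqr_le_sqr_of_norm_le.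
  rewrite !normrM !normfV (gtr0_norm k0) normr_nat ler_pM2r ?invr_gt0 //.
  exact: le_trans (norm_filter_le _ a0 k0) wzw.
apply: le_trans phik _; apply: ler_wpM2r; first exact: sqr_ge0.
rewrite ler_pdivrMr ?exprn_gt0 // mulrAC ler_pdivlMr ?mulr_gt0 ?exprn_gt0 //.
lra.
Qed.

Lemma sqr_filter_div_le a k z w (C : R) :
  0 < a -> 0 < k -> (z - w) ^+ 2 <= C * a ->
  (phi a k w / k) ^+ 2 <=
    4 * (z / k) ^+ 2 + (4 * e ^+ 2 + 16 * C / d ^+ 2) / a * (z - w) ^+ 2.
Proof.
move=> a0 k0 zwC.
have C0 : 0 <= C by rewrite -(pmulr_lge0 _ a0); exact: le_trans (sqr_ge0 _) zwC.
have w_le : `|w| <= `|z| + `|z - w| by rewrite -[w in `|w|](subKr z) ler_normB.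
have near0 : 0 <= 4 * (z / k) ^+ 2 by rewrite mulr_ge0 ?sqr_ge0.
have small0 : 0 <= 4 * e ^+ 2 / a * (z - w) ^+ 2.
  apply: mulr_ge0 (sqr_ge0 _); apply: divr_ge0 (ltW a0).
  exact: mulr_ge0 (sqr_ge0 _).
have large0 : 0 <= 16 * C / (d ^+ 2 * a) * (z - w) ^+ 2.
  apply: mulr_ge0 (sqr_ge0 _); apply: divr_ge0; first exact: mulr_ge0.
  exact: mulr_ge0 (sqr_ge0 _) (ltW a0).
rewrite (_ : (4 * e ^+ 2 + 16 * C / d ^+ 2) / a * _ =
    4 * e ^+ 2 / a * (z - w) ^+ 2 + 16 * C / (d ^+ 2 * a) * (z - w) ^+ 2); last first.
  by field; rewrite ?gt_eqF.
have [zw_le|zw_gt] := leP `|z - w| `|z|.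
  have := sqr_filter_div_le_near (z := z) a0 k0 (w := w); lra.
have [w_small|w_large] := leP `|w| (d * a / k).
  have := sqr_filter_div_le_small (z := z) a0 k0 (w := w); lra.
have := sqr_filter_div_le_large a0 k0 (z := z) (w := w) _ w_large zwC; lra.
Qed.

Lemma esumR_Mplus_Phi_le (L : countType) (kap : L -> R) (a C : R) (z w : L -> R) :
  (forall l, 0 < kap l) -> 0 < a -> l2 (Mplus kap z) ->
  (esumR setT (fun l => (z l - w l) ^+ 2)%R <= (C * a)%:E)%E ->
  (esumR setT (fun l => Mplus kap (Phi phi a kap w) l ^+ 2)%R <=
    (4 * fine (esumR setT (fun l => Mplus kap z l ^+ 2)%R) +
     (4 * e ^+ 2 + 16 * C / d ^+ 2) * C)%:E)%E.
Proof.
move=> kap0 a0 l2x zwC; set K := 4 * e ^+ 2 + 16 * C / d ^+ 2.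
have zw0 l : 0 <= (z l - w l) ^+ 2 by exact: sqr_ge0.
have x0 l : 0 <= Mplus kap z l ^+ 2 by exact: sqr_ge0.
have C0 : 0 <= C.
  by rewrite -(pmulr_lge0 _ a0) -lee_fin; apply: le_trans zwC; exact: esumR_ge0.
have K0 : 0 <= K / a.
  apply: divr_ge0 (ltW a0); apply: addr_ge0; first exact: mulr_ge0 (sqr_ge0 _).
  by apply: divr_ge0 (sqr_ge0 _); exact: mulr_ge0.
have zw_le l : (z l - w l) ^+ 2 <= C * a.
  by rewrite -lee_fin; apply: le_trans zwC; exact: esumR_ge_term.
apply: le_trans (le_esumR setT (fun l => sqr_filter_div_le a0 (kap0 l) (zw_le l))) _.
rewrite esumRD => [|l|l]; last 2 first.
- exact: mulr_ge0 _ (x0 l).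
- exact: mulr_ge0 K0 (zw0 l).
rewrite EFinD; apply: leeD.
  apply: le_trans (esumRZ_le _ (ler0n _ 4) x0) _.
  by rewrite (esumR_fin x0 l2x) EFinM.
apply: le_trans (esumRZ_le _ K0 zw0) _.
apply: le_trans (lee_wpmul2l _ zwC) _; first by rewrite lee_fin.
by rewrite -EFinM lee_fin [leLHS](_ : _ = K * C) //; field; rewrite gt_eqF.
Qed.

End NonlinearFilter.

Theorem proposition4p9 (R : realType) (L : countType) (kap : L -> R)
  (phi : R -> R -> R -> R) (z : L -> R) (at_ : R)
  (delta alpha : nat -> R) (C : R) (zk : nat -> L -> R) :
  (forall l, 0 < kap l) -> (exists M : R, forall l, kap l <= M) ->
  nonlinear_filter phi -> assumptionB phi ->
  0 < at_ -> in_ran_M kap z -> in_ran_Phi phi at_ kap z ->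
  (forall k, 0 < delta k) -> (forall k, 0 < alpha k) ->
  delta @ \oo --> 0 -> alpha @ \oo --> 0 ->
  0 < C -> (forall k, delta k ^+ 2 <= C * alpha k) ->
  (forall k, l2 (zk k)) ->
  (forall k, l2norm (fun l => z l - zk k l) <= delta k) ->
  (forall k, in_ran_M kap (Phi phi (alpha k) kap (zk k))) /\
  l2_weak_cvg (fun k => Mplus kap (Phi phi (alpha k) kap (zk k))) (Mplus kap z).
Proof.
move=> kap_gt0 _ phi_filter [_ [d [e [d_gt0 [e_gt0 phi_small]]]]] _ [l2z l2x] _
  delta_gt0 alpha_gt0 delta_cvg alpha_cvg _ delta_le l2zk zk_near.
have dist_sqr k : (esumR setT (fun l => (z l - zk k l) ^+ 2)%R <= (delta k ^+ 2)%:E)%E.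
  exact: esumR_sqr_le_of_l2norm_le (l2B l2z (l2zk k)) (zk_near k).
have zk_cvg l : zk ^~ l @ \oo --> z l.
  apply: cvg_of_norm_sub_le delta_cvg => k.
  apply: norm_le_of_sqr_le (ltW (delta_gt0 k)) _; rewrite -lee_fin.
  by apply: le_trans (dist_sqr k); apply: esumR_ge_term => // i; exact: sqr_ge0.
have dist_C k : (esumR setT (fun l => (z l - zk k l) ^+ 2)%R <= (C * alpha k)%:E)%E.
  by apply: le_trans (dist_sqr k) _; rewrite lee_fin.
have u_bounded k := esumR_Mplus_Phi_le phi_filter d_gt0 e_gt0 phi_small kap_gt0
  (alpha_gt0 k) l2x (dist_C k).
split=> [k|].
  split; last exact: le_lt_trans (u_bounded k) (ltry _).
  by apply: l2_of_norm_le (l2zk k) _ => l; exact: norm_filter_le.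
apply: l2_weak_cvg_of_bounded u_bounded l2x _ => l.
by apply: cvgMr_tmp; exact: filter_cvg.
Qed.
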